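(* Let $f_c=S_0+\sum_{n\ge1}S_nS_0^{\,n+1}$, an element of the Schröder group $G_{\mathcal S}$, and let $g_c$ be its inverse in $G_{\mathcal S}$ for the composition $\circ$. Write $g_c=\eta\, S_0$ with $\eta\in\mathbb{C}\langle\langle S_0,S_1,\dots\rangle\rangle$, and define $\kappa:=\eta^{-1}S_0$, where $\eta^{-1}$ is the multiplicative inverse of $\eta$ in $\mathbb{C}\langle\langle S_0,S_1,\dots\rangle\rangle$. Then: (a) the image of $\kappa$ under the substitution $S_0\mapsto 1$, $S_n\mapsto S_n$ ($n\ge 1$) is the series $K=1+\sum_{n\ge1}K_n$ of $\widehat{\mathbf{Sym}}$; (b) for every $n\ge1$, the sum $\kappa_n$ of all terms of $\kappa$ of weight $n$ is $$\kappa_n=\sum_{t\in \mathrm{PST}_n}(-1)^{i(t)-1}S^t .$$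
   Context: A reduced plane tree is a rooted plane (ordered) tree in which every internal node has at least two children; the one-vertex tree (a single leaf) is allowed. Its degree is its number of leaves, its weight is the degree minus 1, and $i(t)$ denotes the number of internal nodes of $t$. Let $\mathbb{C}\langle\langle S_0,S_1,\dots\rangle\rangle$ be the algebra of formal (possibly infinite) linear combinations of words in noncommuting letters $S_0,S_1,\dots$ (products are well defined since a word has finitely many factorizations); the weight of a word $S_{i_1}\cdots S_{i_r}$ is $i_1+\dots+i_r$. To a reduced plane tree $t$ associate the word $S^t$ obtained by reading the nodes in preorder (root first, then the subtrees from left to right, recursively), writing $S_{k-1}$ for a node with $k$ children (so a leaf is $S_0$); the weight of $S^t$ equals the weight of $t$, and every $S^t$ ends with $S_0$. For trees $t_0$ with $n$ leaves and $t_1,\dots,t_n$, $t_0\circ(t_1,\dots,t_n)$ is the tree obtained by replacing the leaves of $t_0$, from left to right, by $t_1,\dots,t_n$; this is extended multilinearly to series. The Schröder group $G_{\mathcal S}$ is the set of series $p=S_0+\sum_{n\ge2}p_n$ with $p_n$ a finite linear combination of words $S^t$ for trees $t$ with $n$ leaves, with product $p\circ q=q+\sum_{n\ge2}p_n\circ(q,\dots,q)$; it is a group with identity $S_0$. A reduced plane tree with at least two leaves is prime if the rightmost child of its root is a leaf; $\mathrm{PST}_n$ is the set of prime reduced plane trees of weight $n$. $\mathbf{Sym}$ is the free associative algebra over $\mathbb{C}$ on $S_1,S_2,\dots$ ($\deg S_n=n$), $\widehat{\mathbf{Sym}}$ its completion, $S_0=1$, $\sigma_1=\sum_{n\ge0}S_n$,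 and $K_n$ are the unique homogeneous elements of degree $n$ with $K_0=1$ and $\sigma_1=\sum_{n\ge0}K_n\sigma_1^{\,n}$. *)

(* Coefficient field: algC (algebraic complex numbers);
   all coefficients involved are integers. *)
From mathcomp Require Import all_boot all_order all_algebra algC.
From Stdlib Require List.
Set Implicit Arguments. Unset Strict Implicit. Unset Printing Implicit Defensive.
Import GRing.Theory Num.Theory.
Local Open Scope ring_scope.

(* A word S_{i1} ... S_{ir} is the list [:: i1; ...; ir]; its weight is sumn. *)
Definition ser := seq nat -> algC.

Definition ser_one : ser := fun w => (w == [::])%:R.
Definition letter (a : nat) : ser := fun w => (w == [:: a])%:R.
Definition ser_mul (a b : ser) : ser :=
  fun w => \sum_(i < (size w).+1) a (take i w) * b (drop i w).
Definition ser_pow (a : ser) (n : nat) : ser := iter n (ser_mul a) ser_one.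
Definition homc (n : nat) (a : ser) : ser :=
  fun w => if sumn w == n then a w else 0.

Inductive tree := Node of seq tree.

Fixpoint reduced (t : tree) : bool :=
  let: Node ts := t in ((size ts == 0%N) || (1 < size ts)%N) && all reduced ts.
Fixpoint leaves (t : tree) : nat :=
  let: Node ts := t in if ts is [::] then 1%N else sumn (map leaves ts).
Fixpoint internal (t : tree) : nat :=
  let: Node ts := t in if ts is [::] then 0%N else (sumn (map internal ts)).+1.
Definition tweight (t : tree) : nat := (leaves t).-1.
Fixpoint tword (t : tree) : seq nat :=
  let: Node ts := t in (size ts).-1 :: flatten (map tword ts).

Definition is_leaf (t : tree) : bool := let: Node ts := t in size ts == 0%N.
Definition prime_tree (t : tree) : bool :=
  let: Node ts := t in
  (2 <= leaves t)%N && (0 < size ts)%N && is_leaf (last (Node [::]) ts).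
Definition PST (n : nat) (t : tree) : Prop :=
  reduced t /\ prime_tree t /\ tweight t = n.

(* p = S_0 + sum_{n>=2} p_n with p_n a (necessarily finite) combination of
   words S^t of reduced trees with n leaves *)
Definition in_GS (p : ser) : Prop :=
  p [:: 0%N] = 1 /\
  forall w, p w != 0 -> exists t, reduced t /\ tword t = w.

(* Composition p o q = q + sum_{n>=2} p_n o (q,...,q), where grafting
   t0 o (t1,...,tn) is, on preorder words, the replacement of the k-th
   letter S_0 of S^{t0} by S^{tk}.  By multilinearity the coefficient of x in
   p o q is the sum over words w and factorizations of x obtained by replacing
   each S_0 of w by a nonempty word u, of p(w) * prod q(u).  This is computed
   by recursion on the first letter of w (fuel = length of x). *)
Fixpoint subst_coef (k : nat) (p q : ser) (x : seq nat) : algC :=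
  match k with
  | 0%N => 0
  | k'.+1 =>
    match x with
    | [::] => p [::]
    | b :: x' =>
        (if b != 0%N then subst_coef k' (fun w => p (b :: w)) q x' else 0)
        + \sum_(i < size x)
            q (take i.+1 x) * subst_coef k' (fun w => p (0%N :: w)) q (drop i.+1 x)
    end
  end.
Definition gcomp (p q : ser) : ser := fun x => subst_coef (size x).+1 p q x.

(* f_c = S_0 + sum_{n>=1} S_n S_0^{n+1} *)
Definition fc : ser := fun w =>
  (if w is n :: r then (if n == 0%N then r == [::] else r == nseq n.+1 0%N)
   else false)%:R.

(* g = eta S_0  determines eta uniquely *)
Definition eta_of (g : ser) : ser := fun w => g (rcons w 0%N).
Definition kappa_of (etainv : ser) : ser := ser_mul etainv (letter 0).

Definition pos_word (u : seq nat) : bool := all (fun a => 0 < a)%N u.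
(* sigma_1 = sum_{n>=0} S_n with S_0 = 1 *)
Definition sigma1 : ser := fun u => (size u <= 1)%N%:R.
(* K = sum_n K_n with K_n homogeneous of degree n, K_0 = 1 and
   sigma_1 = sum_n K_n sigma_1^n (on a word of degree d only n <= d contribute) *)
Definition K_def (K : ser) : Prop :=
  K [::] = 1 /\
  forall u, pos_word u ->
    sigma1 u = \sum_(n < (sumn u).+1) ser_mul (homc n K) (ser_pow sigma1 n) u.

(* The image of a under S_0 |-> 1, S_n |-> S_n (n >= 1) is well defined and
   equals K: for every word u in S_1,S_2,..., the words w of a's support that
   map to u form a finite set, and their coefficients sum to K(u). *)
Definition specializes_to (a K : ser) : Prop :=
  forall u, pos_word u ->
    exists s : seq (seq nat),
      (forall w, filter (fun c => 0 < c)%N w = u -> a w != 0 -> w \in s) /\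
      uniq s /\
      K u = \sum_(w <- s | filter (fun c => 0 < c)%N w == u) a w.

From mathcomp Require Import all_boot all_order all_algebra algC zify.
From Stdlib Require List.
Import GRing.Theory Num.Theory.
Local Open Scope ring_scope.
Set Implicit Arguments. Unset Strict Implicit. Unset Printing Implicit Defensive.

(* Words are preorder codes of plane forests (Lukasiewicz words): a letter
   a > 0 is a node with a+1 children, 0 is a leaf, and every word over nat codes
   a forest of reduced trees.  On coefficients, f_c o g = S_0 reads
   g(b x) = [b x = S_0] - [b > 0] g^(b+1)(x), whose solution is
   g_c = sum_t (-1)^i(t) S^t.  Hence eta is the same signed sum over the words w
   such that w S_0 codes a tree; cutting w S_0 after all root subtrees but the
   last shows eta^-1 = 1 - sum +-S_a u over a > 0 and a-forest codes u, and
   kappa = eta^-1 S_0 = S_0 - sum_{t prime} (-1)^i(t) S^t, which is (b).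
   For (a), the specialization of kappa at a word u of Sym is
   [u = 1] - (-1)^|u| times the number of prime tree codes with nonzero letters u;
   a Pascal-type recursion for these counts shows that they satisfy
   sigma_1 = sum_n K_n sigma_1^n, and that equation determines K. *)

(** * Lukasiewicz words *)

Definition luk_step (c a : nat) : nat := if a == 0%N then c.-1 else (c + a)%N.

(* [lukasiewicz c w]: w is the preorder code of a forest of c trees. *)
Fixpoint lukasiewicz (c : nat) (w : seq nat) : bool :=
  if w is a :: w' then (c != 0%N) && lukasiewicz (luk_step c a) w' else c == 0%N.

Lemma luk_stepDl c d a : c != 0%N -> luk_step (c + d) a = (luk_step c a + d)%N.
Proof. by rewrite /luk_step; case: (a == 0%N) => cn0; lia. Qed.

Lemma lukasiewicz0 w : lukasiewicz 0 w = (w == [::]).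
Proof. by case: w. Qed.

Lemma lukasiewicz_cat c d y z :
  lukasiewicz c y -> lukasiewicz d z -> lukasiewicz (c + d) (y ++ z).
Proof.
elim: y c => [|a y IH] c /=; first by move/eqP->.
case/andP=> cn0 hy hz; rewrite luk_stepDl // IH // andbT; lia.
Qed.

Lemma lukasiewicz_catr c y z :
  lukasiewicz c y -> lukasiewicz c (y ++ z) = (z == [::]).
Proof.
elim: y c => [|a y IH] c /=; first by move/eqP->; rewrite lukasiewicz0.
by case/andP=> cn0 /IH ->; rewrite cn0.
Qed.

Lemma lukasiewicz_rcons c v b : lukasiewicz c (rcons v b) -> b = 0%N.
Proof.
elim: v c => [|a v IH] c /=; last by case/andP=> _ /IH.
by rewrite /luk_step; case: (eqVneq b 0%N) => // bn0 /andP[cn0 /eqP]; lia.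
Qed.

Lemma lukasiewicz_count0 c w :
  lukasiewicz c w -> count (pred1 0%N) w = (c + sumn w)%N.
Proof.
elim: w c => [|a w IH] c /=; first by move/eqP->.
case/andP=> cn0 /IH ->; rewrite /luk_step; case: eqP => [->|] /=; lia.
Qed.

Lemma lukasiewicz_convolution c d w :
  \sum_(i < (size w).+1)
     ((lukasiewicz c (take i w) && lukasiewicz d (drop i w))%:R : algC)
  = (lukasiewicz (c + d) w)%:R.
Proof.
elim: w c => [|a w IH] c; first by rewrite big_ord_recl big_ord0 /= addr0 addn_eq0.
rewrite big_ord_recl /=; under eq_bigr => i _ do rewrite add0n.
case: (eqVneq c 0%N) => [->|cn0] /=; last by rewrite add0r IH luk_stepDl // addn_eq0 (negbTE cn0).
by rewrite big1 ?addr0.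
Qed.

(** * Signed forest series and the inverse of f_c *)

Definition positive (a : nat) : bool := (0 < a)%N.

Definition wsign (w : seq nat) : algC := (-1) ^+ count positive w.

Lemma wsign_cat x y : wsign (x ++ y) = wsign x * wsign y.
Proof. by rewrite /wsign count_cat exprD. Qed.

Lemma wsign_take_drop i x : wsign (take i x) * wsign (drop i x) = wsign x.
Proof. by rewrite -wsign_cat cat_take_drop. Qed.

Lemma wsign_rcons v b : wsign (rcons v b) = wsign v * (-1) ^+ positive b.
Proof. by rewrite -cats1 wsign_cat /wsign /= addn0. Qed.

Definition signed_forests (c : nat) : ser :=
  fun w => wsign w * (lukasiewicz c w)%:R.

Lemma ser_mul_signed_forests c d w :
  ser_mul (signed_forests c) (signed_forests d) w = signed_forests (c + d) w.
Proof.
rewrite /ser_mul /signed_forests -lukasiewicz_convolution mulr_sumr.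
by apply: eq_bigr => i _; rewrite mulrACA wsign_take_drop -natrM mulnb.
Qed.

Lemma ser_pow_signed_forests m w :
  ser_pow (signed_forests 1) m w = signed_forests m w.
Proof.
elim: m w => [|m IH] w /=.
  by rewrite /signed_forests lukasiewicz0 /ser_one; case: eqP => [->|]; rewrite ?mulr1 ?mulr0.
rewrite -[m.+1]add1n -ser_mul_signed_forests /ser_mul.
by apply: eq_bigr => i _; rewrite IH.
Qed.

Lemma ser_pow_eq_small (f h : ser) m y :
  (forall w, (size w <= size y)%N -> f w = h w) -> ser_pow f m y = ser_pow h m y.
Proof.
elim: m y => [|m IH] y fh //=; apply: eq_bigr => i _.
rewrite fh ?size_take_min ?geq_minr // IH // => w hw.
by apply: fh; rewrite (leq_trans hw) // size_drop leq_subr.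
Qed.

Lemma subst_coef_eq0 k p q x : (forall w, p w = 0) -> subst_coef k p q x = 0.
Proof.
elim: k p x => [|k IH] p [|b x] p0 //=.
by rewrite big1 => [|i _]; rewrite ?IH ?mulr0 ?if_same ?addr0.
Qed.

(* Substituting [q] for every letter S_0 of S_0^m gives q^m. *)
Lemma subst_coef_pow k m p q x : q [::] = 0 ->
  (forall w, p w = (w == nseq m 0%N)%:R) -> (size x < k)%N ->
  subst_coef k p q x = ser_pow q m x.
Proof.
move=> q0; elim: k m x p => [|k IH] m [|b x] p // pE hk /=.
- by rewrite pE; case: m {pE} => [|m] //=; rewrite /ser_mul big_ord1 q0 mul0r.
case: m pE => [|m] pE.
  rewrite big1 => [|i _]; last by rewrite subst_coef_eq0 ?mulr0 // => w; rewrite pE.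
  by rewrite subst_coef_eq0 ?if_same ?addr0 // => w; rewrite pE.
rewrite (_ : (if b != 0%N then _ else 0) = 0) ?add0r; last first.
  case: ifP => // bn0; apply: subst_coef_eq0 => w.
  by rewrite pE /= eqseq_cons (negbTE bn0).
rewrite /= /ser_mul [RHS]big_ord_recl take0 q0 mul0r add0r.
by apply: eq_bigr => i _; rewrite lift0 (IH m) // size_drop; move: hk => /=; lia.
Qed.

Lemma in_GS_nil g : in_GS g -> g [::] = 0.
Proof. by case=> _ supp_g; apply/eqP; apply: contraT => /supp_g[[ts] []]. Qed.

Lemma gcomp_cons p q b x : gcomp p q (b :: x) =
  (if b != 0%N then subst_coef (size x).+1 (fun w => p (b :: w)) q x else 0) +
  \sum_(i < (size x).+1)
     q (take i.+1 (b :: x)) * subst_coef (size x).+1 (fun w => p (0%N :: w)) q (drop i.+1 (b :: x)).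
Proof. by []. Qed.

Lemma gcomp_fc_cons g b x : g [::] = 0 ->
  gcomp fc g (b :: x) = g (b :: x) + (if b != 0%N then ser_pow g b.+1 x else 0).
Proof.
move=> g0; rewrite gcomp_cons addrC; congr (_ + _); last first.
  by case: ifP => // bn0; apply: subst_coef_pow => // w; rewrite /fc /= (negbTE bn0).
rewrite (eq_bigr (fun i : 'I_(size x).+1 => g (take i.+1 (b :: x)) * (i == size x :> nat)%:R)).
  rewrite big_ord_recr /= take_size eqxx mulr1 big1 ?add0r // => i _.
  by rewrite ltn_eqF ?mulr0.
move=> i _; rewrite (@subst_coef_pow _ 0) //; last by rewrite size_drop /=; lia.
by rewrite /= /ser_one -size_eq0 size_drop subn_eq0 eqn_leq -[(i <= _)%N]ltnS ltn_ord.
Qed.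

Lemma inverse_fcE g : in_GS g -> (forall w, gcomp fc g w = letter 0 w) ->
  forall w, g w = signed_forests 1 w.
Proof.
move=> gGS fcg; have g0 := in_GS_nil gGS.
suff gE n w : (size w <= n)%N -> g w = signed_forests 1 w by move=> w; apply: gE.
elim: n w => [|n IH] [|b x] //= le_x_n; rewrite ?g0 /signed_forests ?mulr0 //.
have := fcg (b :: x); rewrite gcomp_fc_cons // => /(canRL (addrK _)) ->.
rewrite /letter eqseq_cons; case: (eqVneq b 0%N) => [->|bn0].
  by rewrite subr0 /wsign; case: x {le_x_n IH} => [|c x] /=; rewrite ?mulr1 ?mulr0.
rewrite sub0r (ser_pow_eq_small (h := signed_forests 1)) => [|w hw]; last first.
  by apply: IH; lia.
rewrite ser_pow_signed_forests /signed_forests /wsign /= /luk_step (negbTE bn0).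
by rewrite add1n /positive lt0n bn0 exprS mulN1r mulNr.
Qed.

(** * The series eta, its inverse, and kappa *)

Definition prime_body (w : seq nat) : bool :=
  if w is a :: u then (a != 0%N) && lukasiewicz a u else false.

Definition prime_word (w : seq nat) : bool :=
  (last 1%N w == 0%N) && prime_body (take (size w).-1 w).

Lemma prime_word_rcons v b : prime_word (rcons v b) = (b == 0%N) && prime_body v.
Proof. by rewrite /prime_word last_rcons size_rcons -cats1 take_size_cat. Qed.

Definition eta_c : ser := fun w => wsign w * (lukasiewicz 1 (rcons w 0%N))%:R.

Definition eta_c_inv : ser := fun w => (w == [::])%:R - wsign w * (prime_body w)%:R.

Definition kappa_c : ser := fun w => (w == [:: 0%N])%:R - wsign w * (prime_word w)%:R.

Lemma eta_of_signed_forests w : eta_of (signed_forests 1) w = eta_c w.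
Proof. by rewrite /eta_of /signed_forests wsign_rcons mulr1. Qed.

(* A nonempty w with w S_0 a tree word is S_a u1 u2 with u1 an a-forest and
   u2 S_0 a tree word. *)
Lemma prime_body_first_return w : w != [::] ->
  \sum_(i < (size w).+1)
     ((prime_body (take i w) && lukasiewicz 1 (rcons (drop i w) 0%N))%:R : algC)
  = (lukasiewicz 1 (rcons w 0%N))%:R.
Proof.
case: w => [|a w] // _; rewrite big_ord_recl add0r.
under eq_bigr => i _ do rewrite lift0 /=.
rewrite rcons_cons [lukasiewicz 1 _]/= /luk_step; case: (eqVneq a 0%N) => [->|an0] /=.
  by rewrite lukasiewicz0 big1 //; case: w.
rewrite addnC -lukasiewicz_convolution size_rcons [RHS]big_ord_recr /=.
rewrite drop_oversize ?size_rcons // andbF addr0; apply: eq_bigr => i _.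
have le_i_w : (i <= size w)%N by rewrite -ltnS.
by rewrite drop_rcons // -[rcons w _]cats1 takel_cat.
Qed.

Lemma ser_mul_eta_c_inv w : ser_mul eta_c_inv eta_c w = ser_one w.
Proof.
rewrite /ser_mul; under eq_bigr => i _ do rewrite /eta_c_inv mulrBl.
rewrite sumrB big_ord_recl take0 mul1r drop0 big1 ?addr0 => [|i _]; last first.
  by rewrite lift0 -size_eq0 size_takel ?ltn_ord // mul0r.
under eq_bigr => i _ do rewrite /eta_c mulrACA wsign_take_drop -natrM mulnb.
rewrite -mulr_sumr /ser_one; case: (eqVneq w [::]) => [->|wn0].
  by rewrite big_ord1 /eta_c /= mulr0 subr0 mulr1.
by rewrite prime_body_first_return // subrr.
Qed.

Lemma ser_mul_cancelr a b e : e [::] != 0 ->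
  (forall w, ser_mul a e w = ser_mul b e w) -> forall w, a w = b w.
Proof.
move=> e0 abe; suff abn n w : (size w <= n)%N -> a w = b w by move=> w; apply: abn.
elim: n w => [|n IH] w hw.
  move: hw (abe w); rewrite leqn0 size_eq0 => /eqP-> /=.
  by rewrite /ser_mul !big_ord1 => /(mulIf e0).
move: (abe w); rewrite /ser_mul !big_ord_recr /= take_size drop_size.
rewrite (eq_bigr (fun i : 'I_(size w) => b (take i w) * e (drop i w))) => [/addrI/(mulIf e0)//|i _].
by rewrite IH // size_take_min geq_min -ltnS (leq_trans (ltn_ord i)).
Qed.

Lemma eta_c_invE g etainv : in_GS g -> (forall w, gcomp fc g w = letter 0 w) ->
  (forall w, ser_mul etainv (eta_of g) w = ser_one w) ->
  forall w, etainv w = eta_c_inv w.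
Proof.
move=> gGS fcg etainvK; apply: (@ser_mul_cancelr _ _ eta_c).
  by rewrite /eta_c /= mulr1 oner_eq0.
move=> w; rewrite ser_mul_eta_c_inv -etainvK; apply: eq_bigr => i _.
by rewrite -eta_of_signed_forests /eta_of (inverse_fcE gGS fcg).
Qed.

Lemma ser_mul_letter_nil a b : ser_mul a (letter b) [::] = 0.
Proof. by rewrite /ser_mul big_ord1 /letter mulr0. Qed.

Lemma ser_mul_letter_rcons a b v c :
  ser_mul a (letter b) (rcons v c) = (c == b)%:R * a v.
Proof.
rewrite /ser_mul size_rcons !big_ord_recr /= big1 => [|i _]; last first.
  rewrite /letter; case: eqP => [/(congr1 size)|]; rewrite ?mulr0 //.
  by rewrite size_drop size_rcons /=; have := ltn_ord i; lia.
rewrite [drop (size v).+1 _]drop_oversize ?size_rcons // /letter mulr0 addr0 add0r.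
by rewrite -cats1 take_size_cat // drop_size_cat // eqseq_cons andbT mulrC.
Qed.

Lemma kappa_of_eta_c_inv w : kappa_of eta_c_inv w = kappa_c w.
Proof.
rewrite /kappa_of /kappa_c; case/lastP: w => [|v c].
  by rewrite ser_mul_letter_nil /prime_word mulr0 subr0.
rewrite ser_mul_letter_rcons prime_word_rcons /eta_c_inv wsign_rcons.
rewrite -[[:: 0%N]]/(rcons [::] 0%N) eqseq_rcons.
case: (eqVneq c 0%N) => [->|_] /=; last by rewrite andbF mul0r mulr0 subrr.
by rewrite mul1r mulr1 andbT.
Qed.

(** * Trees and their preorder words *)

Definition forest_word (ts : seq tree) : seq nat := flatten (map tword ts).

Lemma forest_word_cat ts us : forest_word (ts ++ us) = forest_word ts ++ forest_word us.
Proof. by rewrite /forest_word map_cat flatten_cat. Qed.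

Lemma forest_word1 t : forest_word [:: t] = tword t.
Proof. exact: cats0. Qed.

Lemma forest_word_node cs ts :
  forest_word (Node cs :: ts) = (size cs).-1 :: forest_word (cs ++ ts).
Proof. by rewrite forest_word_cat. Qed.

Lemma forest_ind (P : seq tree -> Prop) : P [::] ->
  (forall cs ts, P (cs ++ ts) -> P (Node cs :: ts)) -> forall ts, P ts.
Proof.
move=> P0 PS ts; have [n] := ubnP (size (forest_word ts)).
elim: n ts => // n IH [|[cs] ts] // lt_ts_n; apply/PS/IH.
by rewrite forest_word_node ltnS in lt_ts_n.
Qed.

Lemma luk_step_node cs ts : reduced (Node cs) ->
  luk_step (size ts).+1 (size cs).-1 = size (cs ++ ts).
Proof.
rewrite size_cat /luk_step /= => /andP[]; case: (size cs) => [|[|k]] //= _ _; lia.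
Qed.

Lemma lukasiewicz_forest_word ts :
  all reduced ts -> lukasiewicz (size ts) (forest_word ts).
Proof.
elim/forest_ind: ts => // cs ts IH /andP[red_c red_ts].
have /andP[_ red_cs] := red_c.
by rewrite forest_word_node /= luk_step_node // IH // all_cat; apply/andP.
Qed.

Lemma sumn_forest_word ts :
  (sumn (forest_word ts) + size ts)%N = sumn (map leaves ts).
Proof.
elim/forest_ind: ts => // cs ts.
rewrite forest_word_node map_cat sumn_cat size_cat /=.
by case: cs => [|c cs] /=; lia.
Qed.

Lemma count_positive_forest_word ts : all reduced ts ->
  count positive (forest_word ts) = sumn (map internal ts).
Proof.
elim/forest_ind: ts => // cs ts IH /andP[red_c red_ts].
have /andP[ncs red_cs] := red_c.
rewrite forest_word_node /= IH ?all_cat; last exact/andP.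
rewrite map_cat sumn_cat.
by case: cs ncs {IH red_c red_cs} => [|c [|c' cs]] //= _; rewrite add1n.
Qed.

Definition decode_step (a : nat) (st : seq tree) : seq tree :=
  if a == 0%N then Node [::] :: st else Node (take a.+1 st) :: drop a.+1 st.

(* Reading a word from right to left with a stack of trees. *)
Definition decode (w : seq nat) : seq tree := foldr decode_step [::] w.

Lemma decode_forest_word ts st : all reduced ts ->
  foldr decode_step st (forest_word ts) = ts ++ st.
Proof.
elim/forest_ind: ts st => // cs ts IH st /andP[/andP[ncs red_cs] red_ts].
rewrite forest_word_node /= IH ?all_cat; last exact/andP.
rewrite /decode_step -catA.
case: cs ncs {IH red_cs} => [|c [|c' cs]] //= _.
by rewrite take_size_cat ?drop_size_cat.
Qed.

Lemma decode_lukasiewicz c w : lukasiewicz c w ->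
  [/\ size (decode w) = c, all reduced (decode w) & forest_word (decode w) = w].
Proof.
elim: w c => [|a w IH] c /=; first by move/eqP->.
case/andP=> cn0 /IH[size_st red_st fw_st]; rewrite /decode_step.
move: size_st; rewrite /luk_step; case: (eqVneq a 0%N) => [->|an0] size_st.
  by rewrite /= size_st red_st forest_word_node fw_st; split=> //; lia.
have le_a_st : (a.+1 <= size (decode w))%N by lia.
move: red_st; rewrite -{1}(cat_take_drop a.+1 (decode w)) all_cat => /andP[red_t red_d].
rewrite /= size_drop size_takel // red_t red_d forest_word_node size_takel //.
by rewrite cat_take_drop fw_st; split=> //; lia.
Qed.

Definition tree_of_word (w : seq nat) : tree := head (Node [::]) (decode w).

Lemma tree_of_wordK w :
  lukasiewicz 1 w -> reduced (tree_of_word w) /\ tword (tree_of_word w) = w.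
Proof.
rewrite /tree_of_word => /decode_lukasiewicz[].
by case: (decode w) => [|t []] //= _ /andP[-> _] <-; rewrite forest_word1.
Qed.

Lemma twordK t : reduced t -> tree_of_word (tword t) = t.
Proof.
by move=> red_t; rewrite /tree_of_word /decode -forest_word1 decode_forest_word //= red_t.
Qed.

Lemma lukasiewicz_tword t : reduced t -> lukasiewicz 1 (tword t).
Proof.
by move=> red_t; rewrite -forest_word1 (@lukasiewicz_forest_word [:: t]) //= red_t.
Qed.

Lemma leaves_tword t : leaves t = (sumn (tword t)).+1.
Proof. by rewrite -forest_word1 -addn1 (sumn_forest_word [:: t]) /= addn0. Qed.

Lemma internal_tword t : reduced t -> internal t = count positive (tword t).
Proof.
by move=> red_t; rewrite -forest_word1 count_positive_forest_word /= ?red_t ?addn0.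
Qed.

Lemma is_leafE t : is_leaf t = (tword t == [:: 0%N]).
Proof. by case: t => -[|[ds] cs] //=; rewrite eqseq_cons andbF. Qed.

Lemma prime_treeE t : reduced t -> prime_tree t = prime_word (tword t).
Proof.
case: t => cs /andP[ncs red_cs]; case/lastP: cs ncs red_cs => [|cs c] // ncs red_cs.
have two_le_cs : (2 <= size (rcons cs c))%N by move: ncs; rewrite size_rcons; lia.
have -> : prime_tree (Node (rcons cs c)) = is_leaf c.
  have : (size (rcons cs c) <= sumn (map leaves (rcons cs c)))%N.
    by rewrite -sumn_forest_word leq_addl.
  rewrite /prime_tree last_rcons.
  by case: (rcons cs c) two_le_cs => [|d ds] // le_2 le_sum; rewrite (leq_trans le_2 le_sum).
move: red_cs; rewrite -cats1 all_cat /= andbT => /andP[red_cs red_c].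
have /lukasiewicz_forest_word luk_cs := red_cs.
case/lastP E: (tword c) (lukasiewicz_tword red_c) => [|y b] //.
move/lukasiewicz_rcons => b0; subst b.
rewrite is_leafE E -[flatten _]/(forest_word _) size_cat addn1 /=.
rewrite forest_word_cat forest_word1 E -rcons_cat.
rewrite -rcons_cons prime_word_rcons /= lukasiewicz_catr // -[[:: 0%N]]/(rcons [::] 0%N).
by rewrite eqseq_rcons andbT; move: two_le_cs; rewrite size_rcons; case: (size cs).
Qed.

(** * Prime trees of a given weight *)

Fixpoint words_upto (L M : nat) : seq (seq nat) :=
  if L is L'.+1 then [::] :: [seq a :: w | a <- iota 0 M.+1, w <- words_upto L' M]
  else [:: [::]].

Lemma mem_words_upto L M w :
  (w \in words_upto L M) = (size w <= L)%N && all (fun a => a <= M)%N w.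
Proof.
elim: L w => [|L IH] [|a w] //.
rewrite -[words_upto _ _]/([::] :: [seq a :: w | a <- iota 0 M.+1, w <- words_upto L M]).
rewrite in_cons orFb [RHS]/= ltnS; apply/allpairsP/and3P.
  by case=> -[b v] []; rewrite mem_iota IH => /andP[_ ?] /andP[? ?] [-> ->].
by case=> le_w le_a le_M; exists (a, w); rewrite mem_iota IH le_w le_M ltnS le_a.
Qed.

Lemma count_positive_le_sumn w : (count positive w <= sumn w)%N.
Proof. by elim: w => //= a w IH; apply: leq_add => //; case: a. Qed.

Lemma mem_le_sumn a w : a \in w -> (a <= sumn w)%N.
Proof. by move/perm_to_rem/perm_sumn->; rewrite /= leq_addr. Qed.

(* The tree words of weight d have at most 2d+1 letters, all at most d. *)
Definition tree_words (d : nat) : seq (seq nat) := undup (words_upto (2 * d).+1 d).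

Lemma mem_tree_words w : lukasiewicz 1 w -> w \in tree_words (sumn w).
Proof.
move=> luk_w; rewrite mem_undup mem_words_upto; apply/andP; split.
  rewrite -(count_predC (pred1 0%N) w) (lukasiewicz_count0 luk_w).
  rewrite (@eq_count _ _ positive) => [|a]; last by rewrite /= /positive lt0n.
  by have := count_positive_le_sumn w; lia.
by apply/allP => a; apply: mem_le_sumn.
Qed.

Lemma prime_word_lukasiewicz w : prime_word w -> lukasiewicz 1 w.
Proof.
case/lastP: w => [|v b] //; rewrite prime_word_rcons => /andP[/eqP-> {b}].
case: v => [|a u] //= /andP[an0 luk_u]; rewrite /luk_step (negbTE an0).
by rewrite -cats1 addnC lukasiewicz_cat.
Qed.

Lemma prime_word_count_positive w : prime_word w -> (0 < count positive w)%N.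
Proof.
case/lastP: w => [|v b] //; rewrite prime_word_rcons => /andP[_].
by case: v => [|a u] //= /andP[an0 _]; rewrite [positive a]lt0n an0.
Qed.

Definition prime_words (n : nat) : seq (seq nat) :=
  [seq w <- tree_words n | (sumn w == n) && prime_word w].

Lemma uniq_prime_words n : uniq (prime_words n).
Proof. exact/filter_uniq/undup_uniq. Qed.

Lemma mem_prime_words n w : (w \in prime_words n) = (sumn w == n) && prime_word w.
Proof.
rewrite mem_filter andb_idr // => /andP[/eqP<- /prime_word_lukasiewicz].
exact: mem_tree_words.
Qed.

Definition prime_trees (n : nat) : seq tree := map tree_of_word (prime_words n).

Lemma map_tword_prime_trees n : map tword (prime_trees n) = prime_words n.
Proof.
rewrite -map_comp map_id_in // => w; rewrite mem_prime_words => /andP[_].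
by case/prime_word_lukasiewicz/tree_of_wordK.
Qed.

Lemma PST_tword n t : reduced t -> PST n t <-> (sumn (tword t) == n) && prime_word (tword t).
Proof.
move=> red_t; rewrite /PST /tweight leaves_tword -prime_treeE //.
by split=> [[_ [-> <-]]|/andP[/eqP<- ->]]; rewrite ?eqxx.
Qed.

Lemma In_mem (T : eqType) (x : T) (s : seq T) : List.In x s <-> x \in s.
Proof.
elim: s => [|y s IH] //=; rewrite in_cons eq_sym.
split=> [[->|/IH->]|/orP[/eqP->|/IH]]; rewrite ?eqxx ?orbT //; first by left.
by right.
Qed.

Lemma uniq_NoDup (T : eqType) (s : seq T) : uniq s -> List.NoDup s.
Proof.
elim: s => [|x s IH] /=; first by constructor.
by case/andP=> x_s /IH s_NoDup; constructor; rewrite // In_mem; apply/negP.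
Qed.

Lemma NoDup_prime_trees n : List.NoDup (prime_trees n).
Proof.
apply: (@List.NoDup_map_inv _ _ tword).
by rewrite -[List.map _ _]/(map tword _) map_tword_prime_trees; apply/uniq_NoDup/uniq_prime_words.
Qed.

Lemma In_prime_trees n t : List.In t (prime_trees n) <-> PST n t.
Proof.
rewrite List.in_map_iff; split=> [[w [<- /In_mem]]|PST_t].
  rewrite mem_prime_words => /andP[n_w pw_w].
  have [red_t tword_t] := tree_of_wordK (prime_word_lukasiewicz pw_w).
  by rewrite PST_tword // tword_t n_w.
have [red_t _] := PST_t; exists (tword t); rewrite twordK // In_mem mem_prime_words.
by split=> //; apply/PST_tword.
Qed.

Lemma sum_delta_uniq (T : eqType) (s : seq T) (F : T -> algC) x : uniq s ->
  \sum_(y <- s) F y * (y == x)%:R = (x \in s)%:R * F x.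
Proof.
elim: s => [|y s IH] /=; first by rewrite big_nil mul0r.
case/andP=> y_s /IH; rewrite big_cons in_cons => ->.
case: (eqVneq y x) => [<-|_] /=; last by rewrite mulr0 add0r.
by rewrite (negbTE y_s) mul0r addr0 mulr1 mul1r.
Qed.

Lemma homc_kappa_c n w : (0 < n)%N -> homc n kappa_c w =
  \sum_(t <- prime_trees n) (-1) ^+ (internal t).-1 * (tword t == w)%:R.
Proof.
move=> n_gt0; rewrite big_map (eq_big_seq (fun v => (-1) ^+ (count positive v).-1 * (v == w)%:R)).
  rewrite sum_delta_uniq ?uniq_prime_words // mem_prime_words /homc /kappa_c.
  case: (eqVneq (sumn w) n) => [n_w|] /=; last by rewrite mul0r.
  rewrite (_ : w == [:: 0%N] = false) ?sub0r; last first.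
    by apply: contraTF n_gt0 => /eqP w0; rewrite -n_w w0.
  case pw_w: (prime_word w); last by rewrite !mulr0 oppr0 mul0r.
  by rewrite /wsign -(prednK (prime_word_count_positive pw_w)) exprS mulN1r mulr1 mul1r opprK.
move=> v; rewrite mem_prime_words => /andP[_ /prime_word_lukasiewicz/tree_of_wordK[red tw]].
by rewrite internal_tword // tw.
Qed.

(** * The specialization of kappa *)

(* The codes of m-forests with positive letters v, split by their first
   letter: S_a followed by an (m+a)-forest, or S_0 followed by an (m-1)-forest. *)
Fixpoint forest_words (v : seq nat) (m : nat) {struct v} : seq (seq nat) :=
  if v is a :: v' then
    (fix words_m m := if m is m'.+1 then
        map (cons a) (forest_words v' (m + a)) ++ map (cons 0%N) (words_m m')
      else [::]) m
  else [:: nseq m 0%N].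

Lemma forest_words_cons0 a v : forest_words (a :: v) 0 = [::].
Proof. by []. Qed.

Lemma forest_words_consS a v m : forest_words (a :: v) m.+1 =
  map (cons a) (forest_words v (m.+1 + a)) ++ map (cons 0%N) (forest_words (a :: v) m).
Proof. by []. Qed.

Lemma mem_map_cons (a b : nat) y (W : seq (seq nat)) :
  (b :: y \in map (cons a) W) = (b == a) && (y \in W).
Proof. by apply/mapP/andP => [[z z_W [-> ->]]|[/eqP-> y_W]]; [|exists y]. Qed.

Lemma nseq0E y m : (y == nseq m 0%N) = (filter positive y == [::]) && lukasiewicz m y.
Proof.
elim: y m => [|b y IH] [|m] //=; first by rewrite andbF.
rewrite eqseq_cons IH /luk_step /positive; case: (eqVneq b 0%N) => [->|bn0] //=.
by rewrite lt0n bn0.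
Qed.

Lemma mem_forest_words v m y : pos_word v ->
  (y \in forest_words v m) = (filter positive y == v) && lukasiewicz m y.
Proof.
elim: v m y => [|a v IH] m y; first by rewrite mem_seq1 nseq0E.
case/andP=> a_gt0 pos_v; elim: m y => [|m IHm] y.
  by rewrite forest_words_cons0 in_nil lukasiewicz0; case: y => [|b y] //=; rewrite andbF.
rewrite forest_words_consS mem_cat; case: y => [|b y].
  by apply/negbTE; rewrite negb_or; apply/andP; split; apply/negP => /mapP[].
rewrite !mem_map_cons IH // IHm /= /luk_step /positive.
case: (eqVneq b 0%N) => [->|bn0] /=; first by rewrite eq_sym gtn_eqF.
by rewrite lt0n bn0 eqseq_cons orbF -andbA; case: eqP => [->|].
Qed.

Lemma uniq_forest_words v m : pos_word v -> uniq (forest_words v m).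
Proof.
elim: v m => [|a v IH] m // /andP[a_gt0 pos_v]; elim: m => [|m IHm] //.
have cons_inj c : injective (cons c : seq nat -> seq nat) by move=> x y [].
rewrite forest_words_consS cat_uniq !map_inj_uniq ?IH ?IHm // andbT.
apply/hasPn => _ /mapP[y _ ->].
by rewrite mem_map_cons eq_sym gtn_eqF.
Qed.

Definition nforests (v : seq nat) (m : nat) : nat := size (forest_words v m).

Lemma nforests0 v : nforests v 0 = (v == [::]).
Proof. by case: v. Qed.

Lemma nforests_nil m : nforests [::] m = 1%N.
Proof. by []. Qed.

Lemma nforestsS v m : nforests v m.+1 =
  (nforests v m + if v is a :: v' then nforests v' (m.+1 + a) else 0)%N.
Proof.
by case: v => [|a v] //; rewrite /nforests forest_words_consS size_cat !size_map addnC.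
Qed.

Definition alt_sum (N : seq nat -> nat) (m : nat) (x : seq nat) : algC :=
  \sum_(j < (size x).+1)
     (-1) ^+ j * (N (take j x))%:R * 'C(m + sumn (take j x), size x - j)%:R.

Lemma eq_alt_sum N N' m x : N =1 N' -> alt_sum N m x = alt_sum N' m x.
Proof. by move=> NN'; apply: eq_bigr => j _; rewrite NN'. Qed.

Lemma alt_sumD N N' m x :
  alt_sum (fun v => N v + N' v)%N m x = alt_sum N m x + alt_sum N' m x.
Proof.
by rewrite /alt_sum -big_split; apply: eq_bigr => j _; rewrite natrD mulrDr mulrDl.
Qed.

Lemma alt_sum_pascal N m x b :
  alt_sum N m.+1 (rcons x b) = alt_sum N m (rcons x b) + alt_sum N m x.
Proof.
rewrite /alt_sum size_rcons [in LHS]big_ord_recr [in X in X + _]big_ord_recr /=.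
rewrite subnn !bin0 addrAC -big_split; congr (_ + _); apply: eq_bigr => j _ /=.
have le_j_x : (j <= size x)%N by rewrite -ltnS.
by rewrite -cats1 takel_cat // subSn // addSn binS natrD mulrDr.
Qed.

Lemma alt_sum_shift N m a x :
  alt_sum (fun v => if v is b :: v' then N b v' else 0%N) m (a :: x) =
  - alt_sum (N a) (m + a) x.
Proof.
rewrite /alt_sum big_ord_recl; under eq_bigr do rewrite lift0.
rewrite /= mulr0 mul0r add0r -sumrN.
by apply: eq_bigr => j _; rewrite exprS mulN1r !mulNr addnA subSS.
Qed.

Lemma alt_sum_nforests m x : alt_sum (nforests^~ m) m x = (x == [::])%:R.
Proof.
have [n] := ubnP (size x); elim: n m x => // n IHn m x lt_x_n.
case: x lt_x_n => [|a x0] lt_x_n.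
  by rewrite /alt_sum big_ord1 nforests_nil bin0 !mul1r.
elim: m => [|m IHm].
  rewrite /alt_sum big_ord_recl big1 => [|j _]; last by rewrite lift0 nforests0 mulr0 mul0r.
  by rewrite addr0 /= bin0n mulr0.
rewrite (@eq_alt_sum _ (fun v => nforests v m +
    if v is b :: v' then nforests v' (m.+1 + b) else 0)%N) => [|v]; last exact: nforestsS.
rewrite alt_sumD alt_sum_shift IHn //.
rewrite [a :: x0 in LHS]lastI alt_sum_pascal -lastI IHm IHn ?size_belast //.
rewrite -addrA (_ : (belast a x0 == [::]) = (x0 == [::])) ?subrr ?addr0 //.
by case: x0 {lt_x_n IHm}.
Qed.

Lemma ser_pow_sigma1 n x : ser_pow sigma1 n x = 'C(n, size x)%:R.
Proof.
elim: n x => [|n IH] x; first by rewrite /= /ser_one bin0n size_eq0.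
rewrite /= /ser_mul; under eq_bigr => i _ do rewrite IH.
case: x => [|b x]; first by rewrite big_ord1 /sigma1 !bin0 mulr1.
rewrite !big_ord_recl big1 => [|i _].
  by rewrite /sigma1 /= add0n take0 drop0 /= !mul1r addr0 binS natrD addrC.
by rewrite /sigma1 size_takel ?mul0r //= /bump /= !add1n ltnS ltn_ord.
Qed.

Lemma K_def_sum K u :
  \sum_(n < (sumn u).+1) ser_mul (homc n K) (ser_pow sigma1 n) u =
  \sum_(i < (size u).+1) K (take i u) * 'C(sumn (take i u), size u - i)%:R.
Proof.
rewrite /ser_mul exchange_big; apply: eq_bigr => i _.
have take_le : (sumn (take i u) < (sumn u).+1)%N.
  by rewrite ltnS -[sumn u](congr1 sumn (cat_take_drop i u)) sumn_cat leq_addr.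
rewrite (bigD1 (Ordinal take_le)) //= big1 ?addr0 => [|n /eqP ne].
  by rewrite /homc eqxx ser_pow_sigma1 size_drop.
rewrite /homc; case: eqP => [e|]; last by rewrite mul0r.
by case: ne; apply: val_inj; rewrite /= e.
Qed.

(* The prime tree codes with positive letters a :: v are the words S_a y S_0
   with y in forest_words v a. *)
Definition K_c (u : seq nat) : algC :=
  (u == [::])%:R - (-1) ^+ size u * (if u is a :: v then nforests v a else 0)%:R.

Lemma K_def_K_c : K_def K_c.
Proof.
split=> [|u _]; first by rewrite /K_c /= mulr0 subr0.
rewrite K_def_sum; case: u => [|a u].
  by rewrite big_ord1 /K_c /= mulr0 subr0 mulr1.
rewrite big_ord_recl; under eq_bigr do rewrite lift0.
rewrite /= bin0n /= mulr0 add0r /sigma1 /= ltnS leqn0 size_eq0 -(alt_sum_nforests a).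
apply: eq_bigr => j _; have le_j_u : (j <= size u)%N by rewrite -ltnS.
by rewrite /K_c /= size_takel // sub0r exprS mulN1r mulNr opprK subSS.
Qed.

Lemma K_def_uniq K K' : K_def K -> K_def K' -> forall u, pos_word u -> K u = K' u.
Proof.
move=> [_ KE] [_ K'E] u; have [n] := ubnP (size u); elim: n u => // n IH u lt_u_n pos_u.
have := KE _ pos_u; rewrite K'E // !K_def_sum !big_ord_recr take_size subnn bin0 !mulr1.
rewrite [in RHS](eq_bigr (fun i : 'I_(size u) =>
  K' (take i u) * 'C(sumn (take i u), size u - i)%:R)).
  by move/addrI.
move=> i _ /=; have lt_i_u := ltn_ord i.
rewrite IH //; first by rewrite size_takel ?(ltnW lt_i_u) ?(leq_trans lt_i_u lt_u_n).
by move: pos_u; rewrite /pos_word -{1}(cat_take_drop i u) all_cat => /andP[].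
Qed.

Lemma sumn_filter_positive w : sumn (filter positive w) = sumn w.
Proof. by elim: w => //= -[|a] w IH; rewrite /= IH. Qed.

Lemma count_positiveE w : count positive w = size (filter positive w).
Proof. by rewrite size_filter. Qed.

Lemma filter_positive_prime a y : (0 < a)%N ->
  filter positive (a :: rcons y 0%N) = a :: filter positive y.
Proof. by move=> a_gt0; rewrite /= [positive a]a_gt0 filter_rcons. Qed.

Lemma count_prime_words u : pos_word u ->
  count (fun w => (filter positive w == u) && prime_word w) (tree_words (sumn u)) =
  (if u is a :: v then nforests v a else 0)%N.
Proof.
case: u => [|a v] pos_u.
  rewrite (@eq_count _ _ pred0) ?count_pred0 // => w /=; apply/negbTE/andP.
  by case=> /eqP filt_w /prime_word_count_positive; rewrite count_positiveE filt_w.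
have /andP[a_gt0 pos_v] := pos_u.
rewrite -size_filter /nforests -(size_map (fun y => a :: rcons y 0%N) (forest_words v a)).
apply/perm_size/uniq_perm; first exact/filter_uniq/undup_uniq.
  by rewrite map_inj_uniq ?uniq_forest_words // => y1 y2 [/rcons_inj[]].
move=> w; rewrite mem_filter; apply/idP/mapP => [|[y]].
  case/andP=> /andP[filt_w]; case/lastP: w filt_w => [|x b] // filt_w.
  rewrite prime_word_rcons => /andP[/eqP b0]; subst b.
  case: x filt_w => [|b y] // filt_w /andP[bn0 luk_y] _; have b_gt0 : (0 < b)%N by rewrite lt0n.
  move: filt_w; rewrite rcons_cons filter_positive_prime // eqseq_cons => /andP[/eqP ba filt_y].
  by subst b; exists y; rewrite // mem_forest_words // filt_y luk_y.
rewrite mem_forest_words // => /andP[filt_y luk_y] ->.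
have pw : prime_word (a :: rcons y 0%N).
  by rewrite -rcons_cons prime_word_rcons /= -lt0n a_gt0.
rewrite filter_positive_prime // (eqP filt_y) eqxx pw /=.
have -> : (a + sumn v)%N = sumn (a :: rcons y 0%N).
  by rewrite -[RHS]sumn_filter_positive filter_positive_prime // (eqP filt_y).
exact/mem_tree_words/prime_word_lukasiewicz.
Qed.

Lemma sum_natr_count (T : eqType) (s : seq T) (P Q : pred T) :
  \sum_(x <- s | P x) ((Q x)%:R : algC) = (count (predI P Q) s)%:R.
Proof. by rewrite -natr_sum -big_mkcondr sum1_count. Qed.

Lemma specializes_kappa_c K : K_def K -> specializes_to kappa_c K.
Proof.
move=> K_K u pos_u; exists (tree_words (sumn u)); split; [|split; first exact: undup_uniq].
  move=> w filt_w kw_n0; rewrite -filt_w sumn_filter_positive; apply: mem_tree_words.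
  case: (eqVneq w [:: 0%N]) => [-> //|wn0]; apply: prime_word_lukasiewicz.
  by apply: contraR kw_n0 => /negbTE pw_w; rewrite /kappa_c (negbTE wn0) pw_w mulr0 subr0.
rewrite (K_def_uniq K_K K_def_K_c pos_u) /kappa_c sumrB !sum_natr_count.
rewrite (eq_bigr (fun w => (-1) ^+ size u * (prime_word w)%:R)) => [|w /eqP filt_w]; last first.
  by rewrite /wsign count_positiveE filt_w.
rewrite -mulr_sumr sum_natr_count count_prime_words // /K_c; congr (_%:R - _ * _).
rewrite (@eq_count _ _ (fun w => (u == [::]) && (w == [:: 0%N]))) => [|w /=]; last first.
  by case: (eqVneq w [:: 0%N]) => [->|]; rewrite ?andbF // eq_sym.
case: (eqVneq u [::]) => [u0|_]; last by rewrite count_pred0.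
rewrite u0 -[sumn [::]]/(sumn [:: 0%N]).
by rewrite (count_uniq_mem _ (undup_uniq _)) (@mem_tree_words [:: 0%N]).
Qed.

Lemma eq_specializes_to a b K :
  (forall w, a w = b w) -> specializes_to a K -> specializes_to b K.
Proof.
move=> ab aK u /aK[s [supp_s [uniq_s Ku]]]; exists s; split; last split=> //.
  by move=> w; rewrite -ab; apply: supp_s.
by rewrite Ku; apply: eq_bigr => w _.
Qed.

Theorem mainTheorem2 (g etainv K : ser) :
  (* g = g_c is the inverse of f_c in the Schroeder group *)
  in_GS g ->
  (forall w, gcomp fc g w = letter 0 w) ->
  (forall w, gcomp g fc w = letter 0 w) ->
  (* etainv is the multiplicative inverse of eta, where g = eta S_0 *)
  (forall w, ser_mul (eta_of g) etainv w = ser_one w) ->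
  (forall w, ser_mul etainv (eta_of g) w = ser_one w) ->
  (* K = 1 + sum_{n>=1} K_n in Sym-hat *)
  K_def K ->
  specializes_to (kappa_of etainv) K /\
  (forall n : nat, (0 < n)%N ->
     exists s : seq tree,
       List.NoDup s /\ (forall t, List.In t s <-> PST n t) /\
       forall w, homc n (kappa_of etainv) w =
         \sum_(t <- s) (-1) ^+ (internal t).-1 * (tword t == w)%:R).
Proof.
move=> gGS fcg _ _ etainvK K_K.
have kappaE w : kappa_c w = kappa_of etainv w.
  rewrite -kappa_of_eta_c_inv; apply: eq_bigr => i _.
  by rewrite (eta_c_invE gGS fcg etainvK).
split; first exact: eq_specializes_to kappaE (specializes_kappa_c K_K).
move=> n n_gt0; exists (prime_trees n); split; first exact: NoDup_prime_trees.
split=> [t|w]; first exact: In_prime_trees.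
by rewrite -homc_kappa_c // /homc kappaE.
Qed.
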